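(* Let $\tau$ be a good tree-like abstract path of weight $2$. Then $\tau$ has at most one good break. Furthermore: (i) if $\tau$ has exactly one good break, then there is exactly one marker of $\tau$ at which a gluing move applies; (ii) if $\tau$ has no good break, then there are exactly two markers of $\tau$ at which a gluing move applies.
   Context: $\mathbb F=\{0,1\}$, $\mathbb N=\{0,1,2,\dots\}$. Abstract vertex types: $o$ (interior), $u$ (unstable), $s$ (stable); $u,s$ are boundary. An abstract edge is $\varepsilon=(\mu,(o_1,u_1,s_1),(o_2,u_2,s_2))\in\mathbb F\times\mathbb N^3\times\mathbb N^3$ with: if $\mu=0$ then $s_1=u_2=0$; if $\mu=1$ then $o_1=o_2=0$ (interior if $\mu=0$, boundary if $\mu=1$). Weight: $w(\varepsilon)=1$ if $\mu=0$, $2-s_1-u_2$ if $\mu=1$. An abstract path $\tau=(T,\tau,\sigma)$: a non-empty finite directed tree $T=(V,E)$ (nodes; arrows, or breaks), $\tau:V\to$ abstract edges, $\sigma:E\to\{o,u,s\}$, such that for each node $v$ and type $X$, $X_1(v)\ge|\{e:t(e)=v,\sigma(e)=X\}|$, $X_2(v)\ge|\{e:s(e)=v,\sigma(e)=X\}|$, with $X_i(v)$ the entries of $\tau(v)$. Ends: $X_1(\tau)=\sum_vX_1(v)-|\sigma^{-1}(X)|$, $X_2(\tau)=\sum_vX_2(v)-|\sigma^{-1}(X)|$. Nodes are interior/boundary by $\mu(v)$. Weight $w(\tau)=\sum_vw(\tau(v))$. $\tau$ is legal if $s_1(\tau)=u_2(\tau)=0$; tree-like if $o_2(v)+u_2(v)+s_2(v)=1$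 for all $v$; good if $s_1(\tau)=s_2(\tau)=0$. A break $e$ is good if $\sigma(e)\in\{o,u\}$. Subpath = restriction to a non-empty subtree. $\mathrm{Star}^o(v)$ is the subtree induced by $v$ and its adjacent interior nodes. A marker is a node or arrow. Gluing moves (contract a subtree $T'$ to one node $v^*$, reattaching arrows to $v^*$, with $\tau(v^* )=(\mu^*,(o_1(\tau'),u_1(\tau'),s_1(\tau')),(o_2(\tau'),u_2(\tau'),s_2(\tau')))$, $\tau'$ the subpath on $T'$): (Ia) at an arrow both of whose endpoints are interior nodes, contract it, $\mu^*=0$; (Ib) at a boundary node $v$ whose subpath on $\mathrm{Star}^o(v)$ is legal, contract $\mathrm{Star}^o(v)$, $\mu^*=0$; (II) at an arrow both of whose endpoints are boundary nodes, contract it, $\mu^*=1$. *)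

From HB Require Import structures.
From mathcomp Require Import all_boot all_order all_algebra.
Set Implicit Arguments. Unset Strict Implicit. Unset Printing Implicit Defensive.
Import GRing.Theory Num.Theory.

(* Abstract vertex types: o (interior), u (unstable), s (stable). *)
Inductive vtype := VO | VU | VS.

Definition vtype_eqb (x y : vtype) : bool :=
  match x, y with VO, VO | VU, VU | VS, VS => true | _, _ => false end.

(* Abstract edge (mu, (o1,u1,s1), (o2,u2,s2)); mu = true means boundary. *)
Record aedge := AEdge { mu : bool;
  o1 : nat; u1 : nat; s1 : nat; o2 : nat; u2 : nat; s2 : nat }.

Definition aedge_valid (a : aedge) : Prop :=
  if mu a then o1 a = 0%N /\ o2 a = 0%N else s1 a = 0%N /\ u2 a = 0%N.

Definition X1 (X : vtype) (a : aedge) : nat :=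
  match X with VO => o1 a | VU => u1 a | VS => s1 a end.
Definition X2 (X : vtype) (a : aedge) : nat :=
  match X with VO => o2 a | VU => u2 a | VS => s2 a end.

Definition aweight (a : aedge) : int :=
  if mu a then (Posz 2 - Posz (s1 a) - Posz (u2 a))%R else Posz 1.

(* Labelled directed graph data of an abstract path: nodes, arrows (breaks),
   source s, target t, node labels tau, arrow labels sigma. *)
Record apath := APath {
  node : finType;
  arrow : finType;
  src : arrow -> node;
  tgt : arrow -> node;
  tau : node -> aedge;
  sigma : arrow -> vtype }.

Section Defs.
Variable P : apath.

Definition adj : rel (node P) := fun x y =>
  [exists e : arrow P, ((src e == x) && (tgt e == y)) || ((src e == y) && (tgt e == x))].

Definition is_tree : Prop :=
  [/\ 0 < #|node P|, #|arrow P|.+1 = #|node P| & forall x y, connect adj x y].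

Definition is_apath : Prop :=
  [/\ is_tree,
      (forall v : node P, aedge_valid (tau v)),
      (forall (v : node P) X, #|[set e : arrow P | (tgt e == v) && vtype_eqb (sigma e) X]| <= X1 X (tau v)) &
      (forall (v : node P) X, #|[set e : arrow P | (src e == v) && vtype_eqb (sigma e) X]| <= X2 X (tau v))].

Definition ends1 (S : {set node P}) (X : vtype) : nat :=
  (\sum_(v in S) X1 X (tau v) -
   #|[set e : arrow P | [&& src e \in S, tgt e \in S & vtype_eqb (sigma e) X]]|)%N.
Definition ends2 (S : {set node P}) (X : vtype) : nat :=
  (\sum_(v in S) X2 X (tau v) -
   #|[set e : arrow P | [&& src e \in S, tgt e \in S & vtype_eqb (sigma e) X]]|)%N.

Definition allnodes : {set node P} := [set: node P].

Definition weight : int := (\sum_(v : node P) aweight (tau v))%R.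

Definition legal_set (S : {set node P}) : bool :=
  (ends1 S VS == 0%N) && (ends2 S VU == 0%N).

Definition tree_like : Prop :=
  forall v : node P, (o2 (tau v) + u2 (tau v) + s2 (tau v))%N = 1%N.

Definition good : Prop :=
  ends1 allnodes VS = 0%N /\ ends2 allnodes VS = 0%N.

Definition interior (v : node P) : bool := ~~ mu (tau v).
Definition boundary (v : node P) : bool := mu (tau v).

Definition good_break (e : arrow P) : bool :=
  vtype_eqb (sigma e) VO || vtype_eqb (sigma e) VU.

Definition good_breaks : {set arrow P} := [set e : arrow P | good_break e].

Definition star_o (v : node P) : {set node P} :=
  [set w : node P | (w == v) || (adj v w && interior w)].

Definition move_Ia (e : arrow P) : bool := interior (src e) && interior (tgt e).
Definition move_II (e : arrow P) : bool := boundary (src e) && boundary (tgt e).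
Definition move_Ib (v : node P) : bool := boundary v && legal_set (star_o v).

(* number of markers (nodes or arrows) at which some gluing move applies *)
Definition n_gluing_markers : nat :=
  (#|[set e : arrow P | move_Ia e || move_II e]| +
   #|[set v : node P | move_Ib v]|)%N.
End Defs.

(* Tree-likeness leaves every node exactly one outgoing end, so each node but a
   single root r is the source of exactly one break, and no two breaks share a
   source.  In a good path every stable end is used by a break, and summing
   [w(v) + s1(v) = o2(v) + mu(v) + s2(v)] over the nodes, where the stable terms
   cancel, turns weight 2 into [sum_v (o2(v) + mu(v)) = 2].  The root contributes
   1, so there is exactly one further node q with [o2(q) + mu(q) = 1]; every other
   node is interior with a stable outgoing end, so its break is bad and runs from
   an interior node to a boundary node, where no move applies.  Move (Ib) fails at
   a boundary root, whose unstable end stays loose.  So everything happens at the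
   break b leaving q and at q itself: b is good iff [s2(q) = 0], and a case
   analysis on the type of b shows that exactly [1 + s2(q)] markers admit a move. *)

From mathcomp Require Import all_boot all_order all_algebra.
From mathcomp Require Import zify.

Set Implicit Arguments.
Unset Strict Implicit.
Unset Printing Implicit Defensive.

Import GRing.Theory.

Lemma vtype_eqbP x y : reflect (x = y) (vtype_eqb x y).
Proof. by case: x; case: y; constructor. Qed.

Lemma card_set_eq_and (T : finType) (x : T) (b : bool) :
  #|[set y | (y == x) && b]| = b.
Proof.
case: b => /=; first by rewrite -(cards1 x); apply: eq_card => y; rewrite !inE andbT.
by apply/eqP; rewrite cards_eq0; apply/eqP/setP => y; rewrite !inE andbF.
Qed.

Lemma sum_card_fibers (A B : finType) (f : A -> B) (Q : pred A) (S : {set B}) :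
  \sum_(b in S) #|[set a | (f a == b) && Q a]| = #|[set a | (f a \in S) && Q a]|.
Proof.
rewrite -sum1dep_card (partition_big f (mem S)) => [|a]; last by rewrite inE => /andP[].
apply: eq_bigr => b bS; rewrite -sum1dep_card; apply: eq_bigl => a.
by case: eqP => [->|]; rewrite ?andbF // andbT (_ : b \in S = true).
Qed.

Lemma eq_sum_leq (I : finType) (f g : I -> nat) :
  (forall i, f i <= g i) -> \sum_i g i <= \sum_i f i -> forall i, f i = g i.
Proof.
move=> fg gf i; have [le_fg] := leqif_sum (fun i (_ : true) => leqif_eq (fg i)).
by rewrite eqn_leq le_fg gf => /esym/forall_inP/(_ i isT)/eqP.
Qed.

Section TreeLikePath.
Variable P : apath.
Hypothesis HP : is_apath P.

Lemma boundary_u2 (v : node P) : 0 < u2 (tau v) -> boundary v.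
Proof. by case: HP => _ /(_ v); rewrite /aedge_valid /boundary; case: mu => // -[_ ->]. Qed.

Lemma boundary_s1 (v : node P) : 0 < s1 (tau v) -> boundary v.
Proof. by case: HP => _ /(_ v); rewrite /aedge_valid /boundary; case: mu => // -[->]. Qed.

Lemma interior_o1 (v : node P) : 0 < o1 (tau v) -> interior v.
Proof. by case: HP => _ /(_ v); rewrite /aedge_valid /interior; case: mu => // -[->]. Qed.

Lemma interior_o2 (v : node P) : 0 < o2 (tau v) -> interior v.
Proof. by case: HP => _ /(_ v); rewrite /aedge_valid /interior; case: mu => // -[_ ->]. Qed.

Lemma src_end_gt0 (e : arrow P) : 0 < X2 (sigma e) (tau (src e)).
Proof.
case: HP => _ _ _ /(_ (src e) (sigma e)) le; apply: leq_trans le.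
by rewrite card_gt0; apply/set0Pn; exists e; rewrite inE eqxx; apply/vtype_eqbP.
Qed.

Lemma tgt_end_gt0 (e : arrow P) : 0 < X1 (sigma e) (tau (tgt e)).
Proof.
case: HP => _ _ /(_ (tgt e) (sigma e)) le _; apply: leq_trans le.
by rewrite card_gt0; apply/set0Pn; exists e; rewrite inE eqxx; apply/vtype_eqbP.
Qed.

Hypothesis HT : tree_like P.

Lemma X2_le1 X (v : node P) : X2 X (tau v) <= 1.
Proof. by have := HT v; case: X => /=; lia. Qed.

Lemma sigma_src_eq (e e' : arrow P) : src e = src e' -> sigma e = sigma e'.
Proof.
move=> ee'; have := src_end_gt0 e'; have := src_end_gt0 e; rewrite ee'.
by have := HT (src e'); case: (sigma e); case: (sigma e') => //=; lia.
Qed.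

Lemma src_inj : injective (@src P).
Proof.
move=> e e' ee'; apply/eqP/negP => /negP ne.
pose X := sigma e.
have : [set e; e'] \subset [set a | (src a == src e) && vtype_eqb (sigma a) X].
  apply/subsetP => a; rewrite !inE => /orP[]/eqP->; rewrite ?ee' eqxx; apply/vtype_eqbP => //.
  by rewrite /X (sigma_src_eq ee').
have [_ _ _ /(_ (src e) X) le] := HP.
move/subset_leq_card; rewrite cards2 ne => /leq_trans/(_ le).
by have := X2_le1 X (src e); lia.
Qed.

Lemma root_exists :
  exists r : node P, (forall e, src e != r) /\ (forall v, v != r -> exists e, src e = v).
Proof.
have [[_ cardE _] _ _ _] := HP.
have : #|~: (@src P @: [set: arrow P])| == 1.
  by rewrite cardsCs setCK card_imset ?cardsT ?cardsC -?cardE ?subSnn //; exact: src_inj.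
case/cards1P => r hr; exists r; split => [e|v vr].
  apply/eqP => er; have : r \in ~: (@src P @: [set: arrow P]) by rewrite hr set11.
  by rewrite inE -er imset_f ?inE.
have : v \notin ~: (@src P @: [set: arrow P]) by rewrite hr inE.
by rewrite inE negbK => /imsetP[e _ ->]; exists e.
Qed.

(* [parent v] is the target of the unique break leaving [v]; the root is its own parent. *)
Definition parent (v : node P) : node P :=
  if [pick e | src e == v] is Some e then tgt e else v.

Lemma parent_src (e : arrow P) : parent (src e) = tgt e.
Proof.
rewrite /parent; case: pickP => [e' /eqP /src_inj -> // | /(_ e)].
by rewrite eqxx.
Qed.

Lemma parent_reaches_root (r : node P) :
  (forall e, src e != r) -> forall v, exists k, iter k parent v = r.
Proof.
move=> r_root v; have [[_ _ conn] _ _ _] := HP.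
have step x y : adj x y -> (exists k, iter k parent x = r) -> exists k, iter k parent y = r.
  case/existsP => e /orP[]/andP[/eqP ex /eqP ey] [[|k] xk].
  - by have := r_root e; rewrite ex -xk eqxx.
  - by exists k; rewrite -xk iterSr -ex parent_src ey.
  - by exists 1; rewrite /= -ex parent_src ey.
  - by exists k.+2; rewrite iterSr -ex parent_src ey.
have reach (x : node P) p : path (@adj P) x p -> (exists k, iter k parent x = r) ->
    exists k, iter k parent (last x p) = r.
  by elim: p x => [|y p IH] x //= /andP[xy pth] hx; apply: IH pth (step _ _ xy hx).
by case/connectP: (conn r v) => p pth ->; apply: reach pth _; exists 0.
Qed.

Lemma src_neq_tgt (e : arrow P) : src e != tgt e.
Proof.
have [r [r_root _]] := root_exists.
apply/eqP => loop; have [k] := parent_reaches_root r_root (src e).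
by rewrite iter_fix ?parent_src -?loop // => er; have := r_root e; rewrite er eqxx.
Qed.

Lemma star_o_boundary (v w : node P) : w \in star_o v -> boundary w -> w = v.
Proof. by rewrite inE /interior /boundary => /orP[/eqP //|/andP[_ /negbTE ->]]. Qed.

Lemma sigma_src_u2 (e : arrow P) : u2 (tau (src e)) = 1 -> sigma e = VU.
Proof.
by move=> u2e; have := src_end_gt0 e; have := HT (src e); case: (sigma e) => //=; lia.
Qed.

Lemma sum_u2_card (S : {set node P}) :
  \sum_(v in S) u2 (tau v) = #|[set v in S | u2 (tau v) == 1]|.
Proof.
rewrite -sum1dep_card big_mkcondr; apply: eq_bigr => v _.
by have /= := X2_le1 VU v; case: (u2 (tau v)) => [|[|]].
Qed.

Lemma ends2_VU_eq0 (S : {set node P}) :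
    (forall v, v \in S -> u2 (tau v) = 1 -> exists2 e, src e = v & tgt e \in S) ->
  ends2 S VU = 0.
Proof.
move=> closedS; apply/eqP; rewrite /ends2 subn_eq0 sum_u2_card.
apply: leq_trans (leq_imset_card (@src P) _); apply/subset_leq_card/subsetP => v.
rewrite inE => /andP[vS /eqP u2v]; have [e ev eS] := closedS v vS u2v.
by apply/imsetP; exists e; rewrite // inE ev vS eS sigma_src_u2 ?ev.
Qed.

Lemma ends2_VU_neq0 (S : {set node P}) (v : node P) :
    v \in S -> u2 (tau v) = 1 -> (forall e, src e = v -> tgt e \notin S) ->
  ends2 S VU != 0.
Proof.
move=> vS u2v openv; rewrite /ends2 subn_eq0 -ltnNge sum_u2_card.
rewrite -(card_imset _ src_inj) (cardsD1 v [set w in S | _]) !inE vS u2v eqxx add1n ltnS.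
apply/subset_leq_card/subsetP => w /imsetP[e + ->].
rewrite !inE => /and3P[eS tS /vtype_eqbP se].
rewrite eS /= (contraTneq (openv e) tS) /=.
by have := src_end_gt0 e; have := X2_le1 VU (src e); rewrite se /=; lia.
Qed.

Hypothesis HG : good P.

Lemma sum_allnodes (F : node P -> nat) : \sum_(v in allnodes P) F v = \sum_v F v.
Proof. by apply: eq_bigl => v; rewrite inE. Qed.

Lemma s2_card_out (v : node P) :
  s2 (tau v) = #|[set e | (src e == v) && vtype_eqb (sigma e) VS]|.
Proof.
symmetry; move: v; apply: eq_sum_leq => [v|]; first by case: HP => _ _ _ /(_ v VS).
case: HG => _ /eqP; rewrite subn_eq0 sum_allnodes => /leq_trans; apply.
by rewrite -sum_allnodes sum_card_fibers; apply/subset_leq_card/subsetP => e; rewrite !inE.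
Qed.

Lemma s1_card_in (v : node P) :
  s1 (tau v) = #|[set e | (tgt e == v) && vtype_eqb (sigma e) VS]|.
Proof.
symmetry; move: v; apply: eq_sum_leq => [v|]; first by case: HP => _ _ /(_ v VS).
case: HG => /eqP + _; rewrite subn_eq0 sum_allnodes => /leq_trans; apply.
by rewrite -sum_allnodes sum_card_fibers; apply/subset_leq_card/subsetP => e; rewrite !inE.
Qed.

Lemma ends1_VS_eq0 (S : {set node P}) :
  (forall e, sigma e = VS -> tgt e \in S -> src e \in S) -> ends1 S VS = 0.
Proof.
move=> closedS; apply/eqP; rewrite /ends1 subn_eq0.
rewrite (eq_bigr _ (fun v _ => s1_card_in v)) sum_card_fibers.
apply/subset_leq_card/subsetP => e; rewrite !inE => /andP[tS /vtype_eqbP se].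
by rewrite closedS // tS; apply/vtype_eqbP.
Qed.

Lemma sum_s1_s2 : \sum_(v : node P) s1 (tau v) = \sum_(v : node P) s2 (tau v).
Proof.
rewrite (eq_bigr _ (fun v _ => s1_card_in v)) (eq_bigr _ (fun v _ => s2_card_out v)).
by rewrite -!sum_allnodes !sum_card_fibers; apply: eq_card => e; rewrite !inE.
Qed.

Definition o2_mu (v : node P) : nat := o2 (tau v) + mu (tau v).

Lemma aweight_balance (v : node P) :
  (aweight (tau v) + Posz (s1 (tau v)) = Posz (o2_mu v) + Posz (s2 (tau v)))%R.
Proof.
have := HT v; case: HP => _ /(_ v); rewrite /aedge_valid /aweight /o2_mu.
by case: mu => -[? ?] /=; lia.
Qed.

Lemma weightE : weight P = Posz (\sum_(v : node P) o2_mu v).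
Proof.
have sumPosz (F : node P -> nat) : (\sum_v Posz (F v))%R = Posz (\sum_v F v).
  by rewrite (big_morph Posz PoszD (erefl _)).
have balance : (\sum_(v : node P) (aweight (tau v) + Posz (s1 (tau v))) =
                \sum_(v : node P) (Posz (o2_mu v) + Posz (s2 (tau v))))%R.
  by apply: eq_bigr => v _; exact: aweight_balance.
rewrite !big_split /= -/(weight P) !sumPosz sum_s1_s2 in balance.
exact: addIr balance.
Qed.

Section WeightTwo.
Variable r : node P.
Hypothesis r_root : forall e, src e != r.

Lemma root_s2 : s2 (tau r) = 0.
Proof.
rewrite s2_card_out; apply/eqP; rewrite cards_eq0; apply/eqP/setP => e.
by rewrite !inE (negbTE (r_root e)).
Qed.

Lemma root_o2_mu : o2_mu r = 1.
Proof.
have := HT r; rewrite root_s2; case: HP => _ /(_ r).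
by rewrite /aedge_valid /o2_mu; case: mu => -[? ?] /=; lia.
Qed.

Lemma weight2_o2_mu_support :
  weight P = 2 -> exists2 q, q != r & forall v, o2_mu v = (v == r) || (v == q).
Proof.
rewrite weightE => -[]; rewrite (bigD1 r) //= root_o2_mu add1n => -[] /eqP.
case/sum_nat_eq1 => q [qr q1 others]; exists q => // v.
case: (v =P r) => [->|/eqP vr]; first by rewrite root_o2_mu.
by case: (v =P q) => [->|/eqP vq]; [rewrite q1 | rewrite others].
Qed.

Lemma root_not_move_Ib : ~~ move_Ib r.
Proof.
rewrite /move_Ib /boundary /legal_set; case mr: (mu (tau r)) => //=.
have u2r : u2 (tau r) = 1.
  by have := HT r; rewrite root_s2; case: HP => _ /(_ r); rewrite /aedge_valid mr; lia.
rewrite negb_and; apply/orP; right; apply: (ends2_VU_neq0 (v := r)) => //.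
  by rewrite inE eqxx.
by move=> e er; have := r_root e; rewrite er eqxx.
Qed.

Variables (q : node P) (b : arrow P).
Hypothesis o2_muE : forall v, o2_mu v = (v == r) || (v == q).
Hypothesis src_b : src b = q.

Lemma other_node_interior v : v != r -> v != q -> interior v /\ s2 (tau v) = 1.
Proof.
move=> vr vq; have := o2_muE v; rewrite (negbTE vr) (negbTE vq) /o2_mu /interior.
have := HT v; case: HP => _ /(_ v); rewrite /aedge_valid.
by case: mu => -[? ?] /=; split => //; lia.
Qed.

Lemma other_break e : e != b -> [/\ sigma e = VS, interior (src e) & boundary (tgt e)].
Proof.
move=> eb; have sq : src e != q by apply: contra eb => /eqP; rewrite -src_b => /src_inj ->.
have [int_src s2_src] := other_node_interior (r_root e) sq.
have se : sigma e = VS.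
  by have := src_end_gt0 e; have := HT (src e); rewrite s2_src; case: (sigma e) => //=; lia.
by split => //; apply: boundary_s1; have := tgt_end_gt0 e; rewrite se.
Qed.

Lemma card_good_breaks : #|good_breaks P| = (s2 (tau q) == 0).
Proof.
rewrite -(card_set_eq_and b); apply: eq_card => e; rewrite !inE /good_break.
case: (e =P b) => [->|/eqP eb] /=; last by have [-> _ _] := other_break eb.
by have := src_end_gt0 b; have := HT q; rewrite src_b; case: (sigma b) => /=; lia.
Qed.

Lemma card_arrow_moves :
  #|[set e : arrow P | move_Ia e || move_II e]| = move_Ia b || move_II b.
Proof.
rewrite -(card_set_eq_and b); apply: eq_card => e; rewrite !inE.
case: (e =P b) => [->|/eqP eb] //=; have [_ int_src bnd_tgt] := other_break eb.
move: int_src bnd_tgt; rewrite /move_Ia /move_II /interior /boundary.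
by move=> /negbTE -> ->; rewrite andbF.
Qed.

Lemma card_node_moves : #|[set v : node P | move_Ib v]| = move_Ib q.
Proof.
rewrite -(card_set_eq_and q); apply: eq_card => v; rewrite !inE.
case: (v =P q) => [->|/eqP vq] //=; apply/negbTE.
case: (v =P r) => [->|/eqP vr]; first exact: root_not_move_Ib.
have [+ _] := other_node_interior vr vq.
by rewrite /move_Ib /boundary /interior => /negbTE ->.
Qed.

Lemma ends1_star_o_q : ends1 (star_o q) VS = 0.
Proof.
apply: ends1_VS_eq0 => e se /star_o_boundary tq.
have {}tq : tgt e = q by apply/tq/boundary_s1; have := tgt_end_gt0 e; rewrite se.
have [->|eb] := eqVneq e b; first by rewrite src_b inE eqxx.
have [_ int_src _] := other_break eb.
rewrite inE int_src andbT; apply/orP; right; apply/existsP; exists e.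
by rewrite tq !eqxx orbT.
Qed.

Lemma legal_star_o_q : legal_set (star_o q) = (u2 (tau q) == 0) || interior (tgt b).
Proof.
rewrite /legal_set ends1_star_o_q eqxx /=.
have /= := X2_le1 VU q; case u2q: (u2 (tau q)) => [|[|//]] _ /=.
  apply/eqP/ends2_VU_eq0 => v /star_o_boundary vq u2v.
  by have := vq (boundary_u2 _); rewrite u2v => /(_ isT) qv; rewrite -qv u2v in u2q.
have [intz|bndz] := boolP (interior (tgt b)).
  apply/eqP/ends2_VU_eq0 => v /star_o_boundary vq u2v.
  rewrite (vq (boundary_u2 _)) ?u2v //; exists b => //.
  rewrite inE intz andbT; apply/orP; right; apply/existsP; exists b.
  by rewrite src_b !eqxx.
apply/negbTE/(ends2_VU_neq0 (v := q)) => [|//|e eq_q]; first by rewrite inE eqxx.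
have -> : e = b by apply: src_inj; rewrite eq_q src_b.
have bndz' : boundary (tgt b) by move: bndz; rewrite /interior negbK.
apply/negP => /star_o_boundary/(_ bndz') zq.
by have := src_neq_tgt b; rewrite src_b zq eqxx.
Qed.

Lemma n_gluing_markersE : n_gluing_markers P = (s2 (tau q)).+1.
Proof.
rewrite /n_gluing_markers card_arrow_moves card_node_moves /move_Ib legal_star_o_q.
rewrite /move_Ia /move_II /interior /boundary src_b; set z := tgt b.
have := src_end_gt0 b; have := tgt_end_gt0 b; rewrite -/z src_b.
have := HT q; have := o2_muE q; rewrite eqxx orbT /o2_mu.
case: (sigma b) => /= o2_mu_q sum_q in_z out_q.
- rewrite (negbTE (interior_o2 out_q)) (negbTE (interior_o1 in_z)) /=; lia.
- have mq : mu (tau q) := boundary_u2 out_q.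
  have [u2q s2q] : u2 (tau q) = 1 /\ s2 (tau q) = 0 by split; lia.
  by rewrite mq u2q s2q; case: (mu (tau z)).
- have [o2q u2q s2q] : [/\ o2 (tau q) = 0, u2 (tau q) = 0 & s2 (tau q) = 1] by split; lia.
  have mz : mu (tau z) := boundary_s1 in_z.
  by move: o2_mu_q; rewrite o2q mz u2q s2q; case: (mu (tau q)).
Qed.

End WeightTwo.
End TreeLikePath.

Theorem corollary3p17 (P : apath) :
  is_apath P -> tree_like P -> good P -> weight P = Posz 2 ->
  [/\ #|good_breaks P| <= 1,
      #|good_breaks P| = 1 -> n_gluing_markers P = 1
    & #|good_breaks P| = 0 -> n_gluing_markers P = 2].
Proof.
move=> HP HT HG HW.
have [r [r_root r_src]] := root_exists HP HT.
have [q qr o2_muE] := weight2_o2_mu_support HP HT HG r_root HW.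
have [b src_b] := r_src q qr.
rewrite (card_good_breaks HP HT r_root o2_muE src_b).
rewrite (n_gluing_markersE HP HT HG r_root o2_muE src_b).
by have /= := X2_le1 HT VS q; case: (s2 (tau q)) => [|[|]].
Qed.
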